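(* There exists a $\mathbb Q^\pi$-algebra automorphism $u\mapsto u^\dagger$ of $\mathbf U$ which restricts to the dagger involution on the scalars $\mathbb Q(v)^\pi$ (so $v^\dagger=\pi v$, $\pi^\dagger=\pi$) and satisfies, for all $i\in I$ and $\nu\in Y$, $$E_i^\dagger=\pi_i\tilde J_iE_i,\qquad F_i^\dagger=F_i,\qquad K_\nu^\dagger=J_\nu K_\nu,\qquad J_\nu^\dagger=J_\nu .$$
   Context: Setup. $I$ is a finite set with a partition $I=I_{\bar 0}\sqcup I_{\bar 1}$, $I_{\bar 1}\neq\emptyset$; $p(i)=0$ for $i\in I_{\bar0}$ and $p(i)=1$ for $i\in I_{\bar1}$. There is a symmetric $\mathbb Z$-bilinear form $\nu\cdot\nu'$ on $\mathbb Z[I]$ with $d_i:=\frac{i\cdot i}{2}\in\mathbb Z_{>0}$, $a_{ij}:=\frac{2\,i\cdot j}{i\cdot i}\in\mathbb Z_{\le 0}$ for $i\neq j$, $a_{ij}\in2\mathbb Z$ whenever $i\in I_{\bar1}$, and $d_i\equiv p(i)\pmod 2$ (hence $i\cdot j\in2\mathbb Z$ for all $i,j$). A root datum is fixed: free abelian groups $X,Y$ of finite rank with a perfect pairing $\langle\cdot,\cdot\rangle:Y\times X\to\mathbb Z$, a map $I\to Y$, $i\mapsto i$, with linearly independent image, and a map $I\to X$, $i\mapsto i'$, with $\langle i,j'\rangle=\frac{2\,i\cdot j}{i\cdot i}$. For $\nu=\sum\nu_i i\in\mathbb Z[I]$ put $p(\nu)=\sum\nu_ip(i)\in\mathbb Z/2$,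 $\mathrm{ht}\,\nu=\sum\nu_i$, $\tilde\nu=\sum d_i\nu_i i$, regard $\nu$ as an element of $Y$ via $i\mapsto i$, and put $\nu'=\sum\nu_ii'\in X$. $X^+=\{\lambda\in X:\langle i,\lambda\rangle\ge0\ \forall i\}$; $b_{ij}=1-a_{ij}$. Parameters: $\pi$ is an indeterminate with $\pi^2=1$; $\mathbb Z^\pi=\mathbb Z[\pi]/(\pi^2-1)$, $\mathbb Q^\pi=\mathbb Q[\pi]/(\pi^2-1)$, $\mathbb Q(v)^\pi=\mathbb Q(v)[\pi]/(\pi^2-1)$, $\mathbb A=\mathbb Z^\pi[v,v^{-1}]$. $v_i=v^{d_i}$, $\pi_i=\pi^{d_i}$, $v_\nu=\prod v_i^{\nu_i}$, $\pi_\nu=\prod\pi_i^{\nu_i}$. $[n]_{v,\pi}=\frac{(\pi v)^n-v^{-n}}{\pi v-v^{-1}}$, $[n]^!_{v,\pi}=\prod_{l=1}^n[l]_{v,\pi}$, $\begin{bmatrix}n\\k\end{bmatrix}_{v,\pi}=\prod_{l=n-k+1}^{n}((\pi v)^l-v^{-l})\big/\prod_{m=1}^k((\pi v)^m-v^{-m})$. The bar involution of $\mathbb Q(v)^\pi$ is the $\mathbb Q^\pi$-algebra automorphism $f(v,\pi)\mapsto f(\pi v^{-1},\pi)$. The quantum covering group $\mathbf U$ is the $\mathbb Q(v)^\pi$-algebra with generators $E_i,F_i$ ($i\in I$), $K_\mu,J_\mu$ ($\mu\in Y$) and relations: $K_\mu K_\nu=K_{\mu+\nu}$, $J_\mu J_\nu=J_{\mu+\nu}$,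 $K_0=J_0=J_\nu^2=1$, $J_\mu K_\nu=K_\nu J_\mu$; $J_\mu E_i=\pi^{\langle\mu,i'\rangle}E_iJ_\mu$, $J_\mu F_i=\pi^{-\langle\mu,i'\rangle}F_iJ_\mu$, $K_\mu E_i=v^{\langle\mu,i'\rangle}E_iK_\mu$, $K_\mu F_i=v^{-\langle\mu,i'\rangle}F_iK_\mu$; $E_iF_j-\pi^{p(i)p(j)}F_jE_i=\delta_{ij}\frac{\tilde J_i\tilde K_i-\tilde K_{-i}}{\pi_iv_i-v_i^{-1}}$; and for $i\neq j$, $\sum_{k=0}^{b_{ij}}(-1)^k\pi^{\binom k2p(i)+kp(i)p(j)}\begin{bmatrix}b_{ij}\\k\end{bmatrix}_{v_i,\pi_i}X_i^{b_{ij}-k}X_jX_i^k=0$ for $X=E$ and for $X=F$. Here $\tilde J_\nu=J_{\tilde\nu}$, $\tilde K_\nu=K_{\tilde\nu}$. The dagger involution of $\mathbb Q(v)^\pi$ is the $\mathbb Q^\pi$-algebra automorphism $f(v,\pi)\mapsto f(\pi v,\pi)$. *)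

From HB Require Import structures.
From mathcomp Require Import all_boot all_order all_algebra.
Set Implicit Arguments.
Unset Strict Implicit.
Unset Printing Implicit Defensive.
Import Order.TTheory GRing.Theory Num.Theory.
Local Open Scope ring_scope.

(*   Qvpi    = Q(v)^pi = Q(v)[pi]/(pi^2 - 1).  Since pi^2 - 1 = (pi-1)(pi+1) *)
(*             with coprime factors, Q(v)^pi is (Chinese remainder theorem)  *)
(*             the product ring Q(v) x Q(v) via a + b pi |-> (a+b, a-b);     *)
(*             we use this concrete model, in which pi = (1,-1) and v = (v,v)*)
Notation Qv := {fraction {poly rat}}.
Notation Qvpi := (Qv * Qv)%type.

Definition vF : Qv := tofrac 'X.

Definition piS : Qvpi := (1, -1).
Definition vS : Qvpi := (vF, vF).

Definition negv_poly (q : {poly rat}) : {poly rat} := q \Po (- 'X).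
Definition negvQv (x : Qv) : Qv :=
  tofrac (negv_poly \n_(repr x)) / tofrac (negv_poly \d_(repr x)).

(* The dagger involution f(v,pi) |-> f(pi v, pi) of Q(v)^pi.  In the model
   (pi = 1 component, pi = -1 component) it is (x, y) |-> (x(v), y(-v)). *)
Definition daggerS (c : Qvpi) : Qvpi := (c.1, negvQv c.2).

(*   dot i j   = i . j  (the symmetric bilinear form on Z[I], on the basis)  *)
(*   Y = X = Z^n (row vectors), pairing <y,x> = y P x^T, P unimodular.      *)
Definition dd (I : Type) (dot : I -> I -> int) (i : I) : nat :=
  (`|dot i i| %/ 2)%N.
Definition acart (I : Type) (dot : I -> I -> int) (i j : I) : int :=
  ((2 * dot i j) %/ dot i i)%Z.
Definition bser (I : Type) (dot : I -> I -> int) (i j : I) : nat :=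
  `|1 - acart dot i j|%N.

Definition pairing (n : nat) (P : 'M[int]_n) (y x : 'rV[int]_n) : int :=
  (y *m P *m x^T) 0 0.

Definition tildeY (I : Type) (n : nat) (dot : I -> I -> int)
  (iY : I -> 'rV[int]_n) (i : I) : 'rV[int]_n :=
  (Posz (dd dot i)) *: iY i.

Definition v_ (I : Type) (dot : I -> I -> int) (i : I) : Qvpi := vS ^+ dd dot i.
Definition pi_ (I : Type) (dot : I -> I -> int) (i : I) : Qvpi := piS ^+ dd dot i.

Definition qbinom (vv pp : Qvpi) (m k : nat) : Qvpi :=
  (\prod_(m - k + 1 <= l < m.+1) ((pp * vv) ^+ l - vv ^- l)) /
  (\prod_(1 <= l < k.+1) ((pp * vv) ^+ l - vv ^- l)).

(* The quantum covering group U: the Q(v)^pi-algebra presented by            *)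
(* generators and relations, realised as the free algebra of terms modulo    *)
(* the congruence ueq (algebra axioms + defining relations).                 *)
Inductive gen (I : Type) (n : nat) : Type :=
| GE of I | GF of I | GK of 'rV[int]_n | GJ of 'rV[int]_n.

Inductive term (I : Type) (n : nat) : Type :=
| tS of Qvpi                    (* scalar c (i.e. c * 1) *)
| tG of gen I n
| tAdd of term I n & term I n
| tMul of term I n & term I n.

Arguments GE {I n}. Arguments GF {I n}. Arguments GK {I n}. Arguments GJ {I n}.
Arguments tS {I n}. Arguments tG {I n}. Arguments tAdd {I n}. Arguments tMul {I n}.

Definition tpow (I : Type) (n : nat) (x : term I n) (m : nat) : term I n :=
  iter m (tMul x) (tS 1).
Definition tsum (I : Type) (n : nat) (s : seq (term I n)) : term I n :=
  foldr tAdd (tS 0) s.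

Definition serre (I : Type) (n : nat) (p : I -> bool) (dot : I -> I -> int)
  (X : I -> gen I n) (i j : I) : term I n :=
  let b := bser dot i j in
  tsum [seq tMul
          (tS ((-1) ^+ k * piS ^+ ('C(k, 2) * p i + k * (p i * p j))
               * qbinom (v_ dot i) (pi_ dot i) b k))
          (tMul (tpow (tG (X i)) (b - k))
                (tMul (tG (X j)) (tpow (tG (X i)) k)))
       | k <- iota 0 b.+1].

Inductive ueq (I : eqType) (p : I -> bool) (dot : I -> I -> int) (n : nat)
  (P : 'M[int]_n) (iY iX : I -> 'rV[int]_n) : term I n -> term I n -> Prop :=
| ueq_refl x : ueq p dot P iY iX x x
| ueq_sym x y : ueq p dot P iY iX x y -> ueq p dot P iY iX y x
| ueq_trans x y z : ueq p dot P iY iX x y -> ueq p dot P iY iX y z ->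
    ueq p dot P iY iX x z
| ueq_add x x' y y' : ueq p dot P iY iX x x' -> ueq p dot P iY iX y y' ->
    ueq p dot P iY iX (tAdd x y) (tAdd x' y')
| ueq_mul x x' y y' : ueq p dot P iY iX x x' -> ueq p dot P iY iX y y' ->
    ueq p dot P iY iX (tMul x y) (tMul x' y')
| ueq_addA x y z : ueq p dot P iY iX (tAdd x (tAdd y z)) (tAdd (tAdd x y) z)
| ueq_addC x y : ueq p dot P iY iX (tAdd x y) (tAdd y x)
| ueq_add0 x : ueq p dot P iY iX (tAdd (tS 0) x) x
| ueq_addN x : ueq p dot P iY iX (tAdd x (tMul (tS (-1)) x)) (tS 0)
| ueq_mulA x y z : ueq p dot P iY iX (tMul x (tMul y z)) (tMul (tMul x y) z)
| ueq_mul1l x : ueq p dot P iY iX (tMul (tS 1) x) x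
| ueq_mul1r x : ueq p dot P iY iX (tMul x (tS 1)) x
| ueq_mulDl x y z :
    ueq p dot P iY iX (tMul (tAdd x y) z) (tAdd (tMul x z) (tMul y z))
| ueq_mulDr x y z :
    ueq p dot P iY iX (tMul x (tAdd y z)) (tAdd (tMul x y) (tMul x z))
| ueq_SD a b : ueq p dot P iY iX (tS (a + b)) (tAdd (tS a) (tS b))
| ueq_SM a b : ueq p dot P iY iX (tS (a * b)) (tMul (tS a) (tS b))
| ueq_Scentral c x : ueq p dot P iY iX (tMul (tS c) x) (tMul x (tS c))
| r_KK mu nu : ueq p dot P iY iX (tMul (tG (GK mu)) (tG (GK nu))) (tG (GK (mu + nu)))
| r_JJ mu nu : ueq p dot P iY iX (tMul (tG (GJ mu)) (tG (GJ nu))) (tG (GJ (mu + nu)))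
| r_K0 : ueq p dot P iY iX (tG (GK 0)) (tS 1)
| r_J0 : ueq p dot P iY iX (tG (GJ 0)) (tS 1)
| r_J2 nu : ueq p dot P iY iX (tMul (tG (GJ nu)) (tG (GJ nu))) (tS 1)
| r_JK mu nu : ueq p dot P iY iX (tMul (tG (GJ mu)) (tG (GK nu)))
                                 (tMul (tG (GK nu)) (tG (GJ mu)))
| r_JE mu i : ueq p dot P iY iX (tMul (tG (GJ mu)) (tG (GE i)))
    (tMul (tS (piS ^ pairing P mu (iX i))) (tMul (tG (GE i)) (tG (GJ mu))))
| r_JF mu i : ueq p dot P iY iX (tMul (tG (GJ mu)) (tG (GF i)))
    (tMul (tS (piS ^ (- pairing P mu (iX i)))) (tMul (tG (GF i)) (tG (GJ mu))))
| r_KE mu i : ueq p dot P iY iX (tMul (tG (GK mu)) (tG (GE i)))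
    (tMul (tS (vS ^ pairing P mu (iX i))) (tMul (tG (GE i)) (tG (GK mu))))
| r_KF mu i : ueq p dot P iY iX (tMul (tG (GK mu)) (tG (GF i)))
    (tMul (tS (vS ^ (- pairing P mu (iX i)))) (tMul (tG (GF i)) (tG (GK mu))))
| r_EF i j : ueq p dot P iY iX
    (tAdd (tMul (tG (GE i)) (tG (GF j)))
          (tMul (tS (- piS ^+ (p i * p j))) (tMul (tG (GF j)) (tG (GE i)))))
    (tMul (tS ((i == j)%:R / (pi_ dot i * v_ dot i - (v_ dot i)^-1)))
          (tAdd (tMul (tG (GJ (tildeY dot iY i))) (tG (GK (tildeY dot iY i))))
                (tMul (tS (-1)) (tG (GK (- tildeY dot iY i))))))
| r_SerreE i j : i != j -> ueq p dot P iY iX (serre p dot GE i j) (tS 0)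
| r_SerreF i j : i != j -> ueq p dot P iY iX (serre p dot GF i j) (tS 0).

From HB Require Import structures.
From mathcomp Require Import all_boot all_order all_algebra.
From mathcomp Require Import ring.
From Stdlib Require Import Setoid Morphisms.
Import Order.TTheory GRing.Theory Num.Theory.
Local Open Scope ring_scope.

(* The proof
   has three parts.
   1. Scalars.  v |-> -v extends from Q[v] to a ring involution of the
      fraction field Q(v); hence dagger is a ring involution of
      Q(v)^pi = Q(v) x Q(v) with dagger(v) = pi v and dagger(pi) = pi.  Any
      such twist multiplies the quantum binomial [b; k] by pi^(k(b-k)) and
      the coefficient of the E_i F_j relation by pi_i.
   2. Parity.  <tilde i, k'> = d_i a_ik and d_i k (b_ij - k) are even, so
      J_{tilde i} commutes with every E_k, F_k and dagger fixes the Serre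
      coefficients.
   3. U.  phi maps every defining relation into the congruence, hence is
      well defined on U, and phi (phi x) = x in U, so phi is bijective with
      inverse itself; the remaining properties hold by definition. *)

Lemma frac_numden {R : idomainType} (x : {fraction R}) :
  x = tofrac (\n_(repr x)) / tofrac (\d_(repr x)).
Proof.
have d0 : tofrac (\d_(repr x)) != 0 by rewrite tofrac_eq0 denom_ratioP.
apply: (canRL (mulfK d0)); rewrite -{1}[x]reprK /tofrac; unlock.
have pi_mul := FracField.pi_mul (repr x) (Ratio \d_(repr x) 1).
transitivity
  (\pi_({fraction R}) (FracField.mulf (repr x) (Ratio \d_(repr x) 1)))%qT.
  exact: esym pi_mul.
apply/eqmodP; rewrite /= FracField.equivfE /FracField.mulf /=.
by rewrite !numden_Ratio ?mulf_neq0 ?oner_eq0 ?denom_ratioP // !mulr1 mulrC.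
Qed.

Lemma fracP {R : idomainType} (x : {fraction R}) :
  exists a b, b != 0 /\ x = tofrac a / tofrac b.
Proof.
exists \n_(repr x), \d_(repr x).
by split; [apply: denom_ratioP | apply: frac_numden].
Qed.

Section FracMap.
Context {R S : idomainType} (g : {rmorphism R -> S}).
Hypothesis g_inj : injective g.

Definition frac_map (x : {fraction R}) : {fraction S} :=
  tofrac (g \n_(repr x)) / tofrac (g \d_(repr x)).

Lemma tofrac_g_neq0 b : b != 0 -> tofrac (g b) != 0.
Proof. by move=> b0; rewrite tofrac_eq0 -(rmorph0 g) (inj_eq g_inj). Qed.

Lemma frac_map_frac a b : b != 0 ->
  frac_map (tofrac a / tofrac b) = tofrac (g a) / tofrac (g b).
Proof.
move=> b0; rewrite /frac_map.
have := frac_numden (tofrac a / tofrac b).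
have := denom_ratioP (repr (tofrac a / tofrac b)).
move: (\n_ _) (\d_ _) => a' b' b'0 E.
have tb0 : tofrac b != 0 by rewrite tofrac_eq0.
have tb'0 : tofrac b' != 0 by rewrite tofrac_eq0.
have cross : a' * b = a * b'.
  apply/eqP; rewrite -tofrac_eq !tofracM.
  by move/eqP: E; rewrite (eqr_div _ _ tb0 tb'0) => /eqP ->; rewrite mulrC.
apply/eqP; rewrite (eqr_div _ _ (tofrac_g_neq0 _ b'0) (tofrac_g_neq0 _ b0)).
by rewrite -!tofracM -!rmorphM cross mulrC.
Qed.

Lemma frac_map_tofrac a : frac_map (tofrac a) = tofrac (g a).
Proof.
have := frac_map_frac a 1 (oner_neq0 R).
by rewrite tofrac1 rmorph1 tofrac1 !divr1.
Qed.

Lemma frac_map_is_zmod_morphism : zmod_morphism frac_map.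
Proof.
move=> x y; have [a [b [b0 ->]]] := fracP x; have [c [d [d0 ->]]] := fracP y.
have [tb td] : tofrac b != 0 /\ tofrac d != 0 by rewrite !tofrac_eq0.
have [gb gd] := (tofrac_g_neq0 _ b0, tofrac_g_neq0 _ d0).
have diff (F : fieldType) (a1 b1 c1 d1 : F) : b1 != 0 -> d1 != 0 ->
    a1 / b1 - c1 / d1 = (a1 * d1 - c1 * b1) / (b1 * d1).
  by move=> ? ?; field; apply/andP.
rewrite (diff _ _ _ _ _ tb td) -!tofracM -!tofracB !frac_map_frac ?mulf_neq0 //.
by rewrite (diff _ _ _ _ _ gb gd) -!tofracM -!tofracB !rmorphB !rmorphM.
Qed.

Lemma frac_map_is_monoid_morphism : monoid_morphism frac_map.
Proof.
split; first by rewrite -tofrac1 frac_map_tofrac rmorph1 tofrac1.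
move=> x y; have [a [b [b0 ->]]] := fracP x; have [c [d [d0 ->]]] := fracP y.
rewrite mulrACA -invfM -!tofracM !frac_map_frac ?mulf_neq0 //.
by rewrite !rmorphM mulrACA invfM.
Qed.
End FracMap.

Lemma negv_polyK : involutive (comp_poly (- 'X) : {poly rat} -> {poly rat}).
Proof.
move=> q; rewrite -comp_polyA.
have -> : (- 'X) \Po (- 'X) = 'X :> {poly rat}.
  by rewrite raddfN /= comp_polyX opprK.
by rewrite comp_polyXr.
Qed.

Lemma negvQvE : negvQv = frac_map (comp_poly (- 'X)).
Proof. by []. Qed.

Lemma negv_poly_inj : injective (comp_poly (- 'X) : {poly rat} -> {poly rat}).
Proof. exact: can_inj negv_polyK. Qed.

HB.instance Definition _ := GRing.isZmodMorphism.Build Qv Qv negvQv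
  (frac_map_is_zmod_morphism _ negv_poly_inj).
HB.instance Definition _ := GRing.isMonoidMorphism.Build Qv Qv negvQv
  (frac_map_is_monoid_morphism _ negv_poly_inj).

Lemma negvQvK : involutive negvQv.
Proof.
move=> x; have [a [b [b0 ->]]] := fracP x; rewrite negvQvE.
have nb0 : b \Po (- 'X) != 0.
  by rewrite -[X in _ != X](comp_poly0 (- 'X)) (inj_eq negv_poly_inj).
rewrite (frac_map_frac _ negv_poly_inj _ _ b0).
by rewrite (frac_map_frac _ negv_poly_inj _ _ nb0) /= !negv_polyK.
Qed.

Lemma negvQv_vF : negvQv vF = - vF.
Proof.
by rewrite /vF negvQvE (frac_map_tofrac _ negv_poly_inj) /= comp_polyX tofracN.
Qed.

(* Keep the scalar maps folded under simplification, which would otherwise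
   unfold them down to the representation of fractions. *)
Arguments negvQv : simpl never.
Arguments daggerS : simpl never.

Lemma daggerS_is_zmod_morphism : zmod_morphism daggerS.
Proof. by case=> a b [c d]; rewrite /daggerS /= rmorphB. Qed.
Lemma daggerS_is_monoid_morphism : monoid_morphism daggerS.
Proof.
split; first by rewrite /daggerS /= rmorph1.
by case=> a b [c d]; rewrite /daggerS /= rmorphM.
Qed.
HB.instance Definition _ := GRing.isZmodMorphism.Build Qvpi Qvpi daggerS
  daggerS_is_zmod_morphism.
HB.instance Definition _ := GRing.isMonoidMorphism.Build Qvpi Qvpi daggerS
  daggerS_is_monoid_morphism.

Lemma daggerSK : involutive daggerS.
Proof. by case=> a b; rewrite /daggerS /= negvQvK. Qed.

Lemma pairM (a b c d : Qv) : ((a, b) : Qvpi) * (c, d) = (a * c, b * d).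
Proof. by []. Qed.

Lemma piS2 : piS * piS = 1.
Proof. by rewrite /piS pairM mulr1 mulrNN mulr1. Qed.

Lemma daggerS_pi : daggerS piS = piS.
Proof. by rewrite /daggerS /piS /= rmorphN1. Qed.

Lemma daggerS_v : daggerS vS = piS * vS.
Proof. by rewrite /daggerS /piS /vS /= negvQv_vF pairM mul1r mulN1r. Qed.

Lemma piS_unit : piS \is a GRing.unit.
Proof. by apply/unitrP; exists piS; rewrite piS2. Qed.

Lemma vS_unit : vS \is a GRing.unit.
Proof.
have vF0 : vF != 0 by rewrite tofrac_eq0 polyX_eq0.
by apply/unitrP; exists (vF^-1, vF^-1); rewrite /vS !pairM mulVf ?mulfV.
Qed.

(* A ring involution commutes with inversion, also at non-units. *)
Lemma involutive_rmorphV (R : unitRingType) (f : {rmorphism R -> R}) :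
  involutive f -> {morph f : x / x^-1}.
Proof.
move=> fK x; have [ux|nux] := boolP (x \is a GRing.unit); first exact: rmorphV.
have nfx : f x \isn't a GRing.unit.
  by apply: contra nux => /(rmorph_unit f); rewrite fK.
by rewrite !invr_out.
Qed.

Lemma daggerSV : {morph daggerS : x / x^-1}.
Proof. exact: involutive_rmorphV daggerSK. Qed.

Lemma daggerS_piz (z : int) : daggerS (piS ^ z) = piS ^ z.
Proof. by rewrite (rmorphXz _ _ piS_unit) /= daggerS_pi. Qed.

Lemma daggerS_vz (z : int) : daggerS (vS ^ z) = piS ^ z * vS ^ z.
Proof.
rewrite (rmorphXz _ _ vS_unit) /= daggerS_v.
exact: exprMz_comm piS_unit vS_unit (mulrC _ _).
Qed.

(* If q * q = 1 then (q * D)^-1 = q * D^-1, also when D is not a unit. *)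
Lemma invrM_sqr1 {R : comUnitRingType} (q D : R) :
  q * q = 1 -> (q * D)^-1 = q * D^-1.
Proof.
move=> qq; have uq : q \is a GRing.unit by apply/unitrP; exists q.
have qV : q^-1 = q by rewrite -[q^-1]mulr1 -qq mulKr.
have [uD|nuD] := boolP (D \is a GRing.unit); first by rewrite invrM // qV mulrC.
have nqD : q * D \isn't a GRing.unit by rewrite unitrMr.
by rewrite !invr_out.
Qed.

Lemma sqr1_expr_even {R : pzRingType} {q : R} {m : nat} :
  q * q = 1 -> ~~ odd m -> q ^+ m = 1.
Proof.
move=> qq /negPf m_even; rewrite -[m]odd_double_half m_even add0n -muln2.
by rewrite mulnC exprM expr2 qq expr1n.
Qed.

Lemma sqr1_exprz_even {R : unitRingType} {q : R} {z : int} :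
  q * q = 1 -> (2 %| z)%Z -> q ^ z = 1.
Proof.
rewrite dvdzE dvdn2 => qq; case: z => m /= z_even.
  exact: sqr1_expr_even.
by rewrite -[_ ^ _]/((q ^+ m.+1)^-1) sqr1_expr_even ?invr1.
Qed.

Lemma sum_shift (b k : nat) : (k <= b)%N ->
  (\sum_(b - k + 1 <= l < b.+1) l = \sum_(1 <= l < k.+1) l + k * (b - k))%N.
Proof.
move=> kb; rewrite addnC big_addn.
have -> : (b.+1 - (b - k) = k.+1)%N by rewrite subSn ?leq_subr // subKn.
by rewrite big_split /= sum_nat_const_nat subn1.
Qed.

Section TwistedQuantumNumbers.
Context {R : comUnitRingType} {f : {rmorphism R -> R}}.
Hypothesis fV : {morph f : x / x^-1}.
Context {pp vv : R}.
Hypotheses (pp2 : pp * pp = 1) (f_pp : f pp = pp) (f_vv : f vv = pp * vv).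

Let ppX2 (l : nat) : pp ^+ l * pp ^+ l = 1.
Proof. by rewrite -exprMn pp2 expr1n. Qed.

Lemma twist_qfactor (l : nat) :
  f ((pp * vv) ^+ l - vv ^- l) = pp ^+ l * ((pp * vv) ^+ l - vv ^- l).
Proof.
rewrite rmorphB fV !rmorphXn rmorphM f_pp f_vv mulrA pp2 mul1r.
rewrite exprMn (invrM_sqr1 _ _ (ppX2 l)) mulrBr mulrA ppX2 mul1r.
by rewrite [pp ^+ l * _^-1]mulrC.
Qed.

Lemma twist_qbinom (b k : nat) : (k <= b)%N ->
  let qb := (\prod_(b - k + 1 <= l < b.+1) ((pp * vv) ^+ l - vv ^- l)) /
            (\prod_(1 <= l < k.+1) ((pp * vv) ^+ l - vv ^- l)) in
  f qb = pp ^+ (k * (b - k)) * qb.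
Proof.
move=> kb qb; rewrite /qb rmorphM fV !rmorph_prod.
under eq_bigr do rewrite twist_qfactor.
under [X in _ * X^-1]eq_bigr do rewrite twist_qfactor.
rewrite !big_split /= !prodrXr (invrM_sqr1 _ _ (ppX2 _)) mulrACA -exprD.
have ppX_even m c : pp ^+ (m + c + m) = pp ^+ c.
  by rewrite addnAC !exprD ppX2 mul1r.
by rewrite sum_shift // ppX_even.
Qed.

Lemma twist_qcoef_EF (c : nat) :
  f (c%:R / (pp * vv - vv^-1)) = pp * (c%:R / (pp * vv - vv^-1)).
Proof.
rewrite rmorphM rmorph_nat fV rmorphB fV rmorphM f_pp f_vv mulrA pp2 mul1r.
rewrite (invrM_sqr1 _ _ pp2).
have -> : vv - pp * vv^-1 = pp * (pp * vv - vv^-1).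
  by rewrite mulrBr mulrA pp2 mul1r.
by rewrite (invrM_sqr1 _ _ pp2) mulrCA.
Qed.
End TwistedQuantumNumbers.

Lemma piSX2 (d : nat) : piS ^+ d * piS ^+ d = 1.
Proof. by rewrite -exprMn piS2 expr1n. Qed.

Lemma daggerS_piX (d : nat) : daggerS (piS ^+ d) = piS ^+ d.
Proof. by rewrite rmorphXn /= daggerS_pi. Qed.

Lemma daggerS_vX (d : nat) : daggerS (vS ^+ d) = piS ^+ d * vS ^+ d.
Proof. by rewrite rmorphXn /= daggerS_v exprMn. Qed.

Lemma daggerS_serre_coef (d b k e : nat) :
  (k <= b)%N -> ~~ odd (d * (k * (b - k))) ->
  daggerS ((-1) ^+ k * piS ^+ e * qbinom (vS ^+ d) (piS ^+ d) b k) =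
  (-1) ^+ k * piS ^+ e * qbinom (vS ^+ d) (piS ^+ d) b k.
Proof.
move=> kb par; rewrite rmorphM.
rewrite (twist_qbinom daggerSV (piSX2 d)
  (daggerS_piX d) (daggerS_vX d) _ _ kb) -exprM (sqr1_expr_even piS2 par) mul1r.
by rewrite rmorphM rmorphXn rmorphN1 /= daggerS_piX.
Qed.

Lemma daggerS_coef_EF (d : nat) (c : nat) :
  daggerS (c%:R / (piS ^+ d * vS ^+ d - (vS ^+ d)^-1)) =
  piS ^+ d * (c%:R / (piS ^+ d * vS ^+ d - (vS ^+ d)^-1)).
Proof.
exact (twist_qcoef_EF daggerSV (piSX2 d) (daggerS_piX d) (daggerS_vX d) c).
Qed.

Lemma mulr_rev3 (R : comPzRingType) (a b c : R) : a * b * c = c * b * a.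
Proof. by rewrite mulrC [a * b]mulrC mulrA. Qed.

Section CoveringGroup.
Variables (I : finType) (p : I -> bool) (dot : I -> I -> int) (n : nat)
  (P : 'M[int]_n) (iY iX : I -> 'rV[int]_n).

Local Notation T := (term I n).
Local Notation eqU := (ueq p dot P iY iX).
Local Infix "≡" := eqU (at level 70).
Local Notation "x ⊗ y" := (tMul x y) (at level 40, left associativity).
Local Notation "x ⊕ y" := (tAdd x y) (at level 50, left associativity).
Local Notation ti i := (tildeY dot iY i).
Local Notation E i := (tG (GE i) : T).
Local Notation F i := (tG (GF i) : T).
Local Notation K mu := (tG (GK mu) : T).
Local Notation J mu := (tG (GJ mu) : T).

Local Instance eqU_equiv : Equivalence eqU.
Proof. split; [exact: ueq_refl | exact: ueq_sym | exact: ueq_trans]. Qed.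
Local Instance tAdd_proper : Proper (eqU ==> eqU ==> eqU) (@tAdd I n).
Proof. by move=> x x' hx y y' hy; apply: ueq_add. Qed.
Local Instance tMul_proper : Proper (eqU ==> eqU ==> eqU) (@tMul I n).
Proof. by move=> x x' hx y y' hy; apply: ueq_mul. Qed.

Lemma tmulA (x y z : T) : (x ⊗ y) ⊗ z ≡ x ⊗ (y ⊗ z).
Proof. symmetry; exact: ueq_mulA. Qed.

Lemma tmul0l (x : T) : tS 0 ⊗ x ≡ tS 0.
Proof.
set z := tS 0 ⊗ x.
have zz : z ≡ z ⊕ z by rewrite /z -ueq_mulDl -ueq_SD addr0; reflexivity.
have : tS 0 ≡ z ⊕ tS (-1) ⊗ z by symmetry; apply: ueq_addN.
by rewrite {1}zz -ueq_addA ueq_addN ueq_addC ueq_add0 => ->; reflexivity.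
Qed.

Lemma tmul0r (x : T) : x ⊗ tS 0 ≡ tS 0.
Proof. rewrite -ueq_Scentral tmul0l; reflexivity. Qed.

Lemma tS_mulS (c d : Qvpi) (x : T) : tS c ⊗ (tS d ⊗ x) ≡ tS (c * d) ⊗ x.
Proof. rewrite -tmulA -ueq_SM; reflexivity. Qed.
Lemma tS_mulS_end (c d : Qvpi) : tS c ⊗ tS d ≡ (tS (c * d) : T).
Proof. rewrite -ueq_SM; reflexivity. Qed.
Lemma tG_mulS (c : Qvpi) (g : gen I n) (y : T) :
  tG g ⊗ (tS c ⊗ y) ≡ tS c ⊗ (tG g ⊗ y).
Proof. rewrite -!tmulA (ueq_Scentral _ _ _ _ _ c (tG g)); reflexivity. Qed.
Lemma tG_mulS_end (c : Qvpi) (g : gen I n) : tG g ⊗ tS c ≡ (tS c ⊗ tG g : T).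
Proof. rewrite (ueq_Scentral _ _ _ _ _ c (tG g)); reflexivity. Qed.
Lemma tS_congr (c d : Qvpi) (x : T) : c = d -> tS c ⊗ x ≡ tS d ⊗ x.
Proof. by move->; reflexivity. Qed.

(* Normal form for monomials: products associated to the right, with all
   scalar factors collected into a single leading scalar. *)
Ltac norm := rewrite ?tmulA;
  repeat progress rewrite ?tS_mulS ?tS_mulS_end ?tG_mulS ?tG_mulS_end.

Definition commU (a b : T) := a ⊗ b ≡ b ⊗ a.

Lemma commU_sym a b : commU a b -> commU b a.
Proof. by rewrite /commU => ->; reflexivity. Qed.
Lemma commU_l a b z : commU a b -> a ⊗ (b ⊗ z) ≡ b ⊗ (a ⊗ z).
Proof. by move=> ab; rewrite -!tmulA ab; reflexivity. Qed.
Lemma commU_S c x : commU (tS c) x.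
Proof. exact: ueq_Scentral. Qed.
Lemma commU_mull a b x : commU a x -> commU b x -> commU (a ⊗ b) x.
Proof.
by rewrite /commU => ax bx; rewrite tmulA bx -tmulA ax tmulA; reflexivity.
Qed.
Lemma commU_mulr a b x : commU x a -> commU x b -> commU x (a ⊗ b).
Proof. by move=> xa xb; apply/commU_sym/commU_mull; apply/commU_sym. Qed.
Lemma commU_powr a b m : commU a b -> commU a (tpow b m).
Proof.
by move=> ab; elim: m => [|m IH]; [apply/commU_sym/commU_S | exact: commU_mulr].
Qed.
Lemma commU_powl a b m : commU a b -> commU (tpow a m) b.
Proof. by move=> ab; apply/commU_sym/commU_powr/commU_sym. Qed.

Lemma commU_rearrange {a1 b1 a2 b2 a3 b3 : T} :
  commU a2 b1 -> commU a3 b1 -> commU a3 b2 -> commU a1 a2 ->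
  (a1 ⊗ b1) ⊗ ((a2 ⊗ b2) ⊗ (a3 ⊗ b3)) ≡ (a2 ⊗ (a1 ⊗ a3)) ⊗ (b1 ⊗ (b2 ⊗ b3)).
Proof.
move=> a2b1 a3b1 a3b2 a1a2; rewrite !tmulA.
rewrite (commU_l _ _ _ (commU_sym _ _ a2b1)) (commU_l _ _ _ (commU_sym _ _ a3b2)).
rewrite (commU_l _ _ _ (commU_sym _ _ a3b1)) (commU_l _ _ _ a1a2).
reflexivity.
Qed.

Local Instance tpow_proper : Proper (eqU ==> eq ==> eqU) (@tpow I n).
Proof.
move=> x y xy m _ <-; elim: m => [|m IH]; first reflexivity.
by rewrite /= IH xy; reflexivity.
Qed.

Lemma tpowD (x : T) m k : tpow x (m + k) ≡ tpow x m ⊗ tpow x k.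
Proof.
elim: m => [|m IH]; first by rewrite add0n /= ueq_mul1l; reflexivity.
by rewrite addSn /= IH tmulA; reflexivity.
Qed.

Lemma tpowM (a b : T) m : commU a b -> tpow (a ⊗ b) m ≡ tpow a m ⊗ tpow b m.
Proof.
move=> ab; elim: m => [|m IH]; first by rewrite /= ueq_mul1l; reflexivity.
rewrite /= IH tmulA -[b ⊗ (tpow a m ⊗ tpow b m)]tmulA.
by rewrite (commU_sym _ _ (commU_powl _ _ m ab)) !tmulA; reflexivity.
Qed.

Lemma eq_tsum (s : seq nat) (f g : nat -> T) :
  (forall k, k \in s -> f k ≡ g k) -> tsum (map f s) ≡ tsum (map g s).
Proof.
elim: s => [|a s IH] fg /=; first reflexivity.
rewrite (fg a (mem_head _ _)) IH; first reflexivity.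
by move=> k ks; apply: fg; rewrite inE ks orbT.
Qed.

Lemma tsum_mull (X : T) (s : seq nat) (f : nat -> T) :
  tsum (map (fun k => X ⊗ f k) s) ≡ X ⊗ tsum (map f s).
Proof.
elim: s => [|a s IH] /=; first by rewrite tmul0r; reflexivity.
by rewrite IH ueq_mulDr; reflexivity.
Qed.

Lemma JJ_cancel mu z : J mu ⊗ (J mu ⊗ z) ≡ z.
Proof. by rewrite -tmulA r_J2 ueq_mul1l; reflexivity. Qed.
Lemma J_opp mu : J (- mu) ≡ J mu.
Proof.
rewrite -[J (- mu)]ueq_mul1r -(r_J2 p dot P iY iX mu) -tmulA r_JJ addNr r_J0.
by rewrite ueq_mul1l; reflexivity.
Qed.
Lemma commU_JJ mu nu : commU (J mu) (J nu).
Proof. by rewrite /commU !r_JJ addrC; reflexivity. Qed.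
Lemma commU_JK mu nu : commU (J mu) (K nu).
Proof. exact: r_JK. Qed.
Lemma JE_l mu i z :
  J mu ⊗ (E i ⊗ z) ≡ tS (piS ^ pairing P mu (iX i)) ⊗ (E i ⊗ (J mu ⊗ z)).
Proof. by rewrite -tmulA r_JE !tmulA; reflexivity. Qed.
Lemma JF_l mu i z :
  J mu ⊗ (F i ⊗ z) ≡ tS (piS ^ (- pairing P mu (iX i))) ⊗ (F i ⊗ (J mu ⊗ z)).
Proof. by rewrite -tmulA r_JF !tmulA; reflexivity. Qed.

Hypothesis Hpos : forall i, 0 < dot i i.
Hypothesis Hneg : forall i j, i != j -> acart dot i j <= 0.
Hypothesis Hodd : forall i j, i != j -> p i -> (2 %| acart dot i j)%Z.
Hypothesis Hpar : forall i, odd (dd dot i) = p i.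
Hypothesis HiX : forall i j, pairing P (iY i) (iX j) = acart dot i j.

Lemma acart_ii i : acart dot i i = 2.
Proof. by rewrite /acart mulzK // gt_eqF. Qed.

(* <tilde i, k'> = d_i a_ik is even: d_i is even unless i is odd, and then
   a_ik is even. *)
Lemma pairing_tilde_even i k : (2 %| pairing P (ti i) (iX k))%Z.
Proof.
have -> : pairing P (ti i) (iX k) = (dd dot i)%:Z * acart dot i k.
  by rewrite /pairing /tildeY -!scalemxAl mxE -HiX.
rewrite dvdzE abszM dvdn2 oddM Hpar; have [p_i|//] := boolP (p i).
have [<-|ik] := eqVneq i k; first by rewrite acart_ii.
by move: (Hodd _ _ ik p_i); rewrite dvdzE dvdn2 => ->.
Qed.

(* For odd i the Serre exponent b_ij = 1 - a_ij is odd, so that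
   d_i k (b_ij - k) is always even. *)
Lemma bser_odd i j : i != j -> p i -> odd (bser dot i j).
Proof.
move=> ij p_i; rewrite /bser.
have -> : 1 - acart dot i j = Posz (1 + `|acart dot i j|)%N.
  by rewrite PoszD (lez0_abs (Hneg _ _ ij)).
by move: (Hodd _ _ ij p_i); rewrite absz_nat /= dvdzE dvdn2 => ->.
Qed.

Lemma serre_exponent_even i j k : i != j -> (k <= bser dot i j)%N ->
  ~~ odd (dd dot i * (k * (bser dot i j - k))).
Proof.
move=> ij kb; rewrite oddM Hpar; have [p_i|//] := boolP (p i).
by rewrite oddM (oddB kb) (bser_odd _ _ ij p_i) /=; case: (odd k).
Qed.

Lemma commU_JtE i k : commU (J (ti i)) (E k).
Proof.
rewrite /commU r_JE (sqr1_exprz_even piS2 (pairing_tilde_even i k)) ueq_mul1l.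
reflexivity.
Qed.
Lemma commU_JtF i k : commU (J (ti i)) (F k).
Proof.
have even_opp : (2 %| - pairing P (ti i) (iX k))%Z.
  by rewrite dvdzE abszN -dvdzE pairing_tilde_even.
rewrite /commU r_JF (sqr1_exprz_even piS2 even_opp) ueq_mul1l; reflexivity.
Qed.

Fixpoint phi (x : T) : T :=
  match x with
  | tS c => tS (daggerS c)
  | tG (GE i) => tS (pi_ dot i) ⊗ (J (ti i) ⊗ E i)
  | tG (GF i) => F i
  | tG (GK nu) => J nu ⊗ K nu
  | tG (GJ nu) => J nu
  | tAdd a b => phi a ⊕ phi b
  | tMul a b => phi a ⊗ phi b
  end.

Lemma phi_tpow x m : phi (tpow x m) ≡ tpow (phi x) m.
Proof.
elim: m => [|m IH] /=; first by rewrite rmorph1; reflexivity.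
by rewrite IH; reflexivity.
Qed.

Lemma phi_tsum s : phi (tsum s) ≡ tsum (map phi s).
Proof.
elim: s => [|a s IH] /=; first by rewrite rmorph0; reflexivity.
by rewrite IH; reflexivity.
Qed.

Definition G i : T := tS (pi_ dot i) ⊗ J (ti i).

Lemma phiE i : phi (E i) ≡ G i ⊗ E i.
Proof. by rewrite /= /G tmulA; reflexivity. Qed.
Lemma commU_GE i k : commU (G i) (E k).
Proof. by apply: commU_mull; [exact: commU_S | exact: commU_JtE]. Qed.
Lemma commU_GG i j : commU (G i) (G j).
Proof.
apply: commU_mull; first exact: commU_S.
by apply: commU_mulr; [apply/commU_sym/commU_S | exact: commU_JJ].
Qed.

Lemma phi_KK mu nu : phi (K mu ⊗ K nu) ≡ phi (K (mu + nu)).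
Proof.
rewrite /= tmulA (commU_l _ _ _ (commU_sym _ _ (commU_JK nu mu))) -tmulA.
by rewrite r_JJ r_KK; reflexivity.
Qed.

Lemma phi_JK mu nu : phi (J mu ⊗ K nu) ≡ phi (K nu ⊗ J mu).
Proof. by rewrite /= (commU_l _ _ _ (commU_JJ mu nu)) r_JK tmulA; reflexivity. Qed.

Lemma phi_JE mu i :
  phi (J mu ⊗ E i) ≡ phi (tS (piS ^ pairing P mu (iX i)) ⊗ (E i ⊗ J mu)).
Proof.
rewrite /= daggerS_piz tG_mulS (commU_l _ _ _ (commU_JJ mu _)) r_JE.
by norm; apply: tS_congr; exact: mulrC.
Qed.

Lemma phi_JF mu i :
  phi (J mu ⊗ F i) ≡ phi (tS (piS ^ (- pairing P mu (iX i))) ⊗ (F i ⊗ J mu)).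
Proof. by rewrite /= daggerS_piz; exact: r_JF. Qed.

Lemma phi_KE mu i :
  phi (K mu ⊗ E i) ≡ phi (tS (vS ^ pairing P mu (iX i)) ⊗ (E i ⊗ K mu)).
Proof.
rewrite /= daggerS_vz; norm.
rewrite (commU_l _ _ _ (commU_sym _ _ (commU_JK _ mu))) r_KE; norm.
rewrite (commU_l _ _ _ (commU_JJ mu _)) (JE_l mu i); norm.
by apply: tS_congr; exact: mulr_rev3.
Qed.

Lemma phi_KF mu i :
  phi (K mu ⊗ F i) ≡ phi (tS (vS ^ (- pairing P mu (iX i))) ⊗ (F i ⊗ K mu)).
Proof.
rewrite /= daggerS_vz; norm; rewrite r_KF; norm; rewrite (JF_l mu i); norm.
by apply: tS_congr; exact: mulrC.
Qed.

(* Both sides acquire the factor pi_i J_{tilde i}: on the left since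
   J_{tilde i} commutes with F_j, on the right from dagger of the
   coefficient, using J_{-tilde i} = J_{tilde i}. *)
Lemma phi_EF i j :
  phi (E i ⊗ F j ⊕ tS (- piS ^+ (p i * p j)) ⊗ (F j ⊗ E i)) ≡
  phi (tS ((i == j)%:R / (pi_ dot i * v_ dot i - (v_ dot i)^-1)) ⊗
    (J (ti i) ⊗ K (ti i) ⊕ tS (-1) ⊗ K (- ti i))).
Proof.
rewrite /= rmorphN /= daggerS_piX.
transitivity (tS (pi_ dot i) ⊗ (J (ti i) ⊗
   (E i ⊗ F j ⊕ tS (- piS ^+ (p i * p j)) ⊗ (F j ⊗ E i)))).
  rewrite !ueq_mulDr; norm.
  rewrite (commU_l _ _ _ (commU_sym _ _ (commU_JtF i j))).
  by apply: ueq_add; [reflexivity | apply: tS_congr; exact: mulrC].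
rewrite r_EF rmorphN1 J_opp /pi_ /v_ daggerS_coef_EF; norm.
by rewrite !ueq_mulDr; norm; reflexivity.
Qed.

(* dagger fixes the Serre coefficients and phi fixes every F_k. *)
Lemma phi_SerreF i j : i != j -> phi (serre p dot GF i j) ≡ tS 0.
Proof.
move=> ij; rewrite -(r_SerreF p dot P iY iX ij) /serre phi_tsum -map_comp.
apply: eq_tsum => k; rewrite mem_iota add0n ltnS => /andP[_ kb].
rewrite /= (daggerS_serre_coef _ _ _ _ kb (serre_exponent_even _ _ _ ij kb)) !phi_tpow.
reflexivity.
Qed.

(* The k-th Serre monomial for E: all the G factors can be pulled out
   to the left, where they assemble into G_j G_i^b. *)
Lemma phi_serre_monomial i j b k : (k <= b)%N ->
  tpow (G i ⊗ E i) (b - k) ⊗ ((G j ⊗ E j) ⊗ tpow (G i ⊗ E i) k) ≡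
  (G j ⊗ tpow (G i) b) ⊗ (tpow (E i) (b - k) ⊗ (E j ⊗ tpow (E i) k)).
Proof.
move=> kb; rewrite !(tpowM _ _ _ (commU_GE i i)).
rewrite (commU_rearrange (commU_powr _ _ _ (commU_GE j i))
  (commU_powl _ _ _ (commU_powr _ _ _ (commU_GE i i)))
  (commU_powl _ _ _ (commU_GE i j)) (commU_powl _ _ _ (commU_GG i j))).
by rewrite -tpowD subnK //; reflexivity.
Qed.

(* phi maps the E-Serre element to G_j G_i^b times itself. *)
Lemma phi_SerreE i j : i != j -> phi (serre p dot GE i j) ≡ tS 0.
Proof.
move=> ij; set b := bser dot i j.
rewrite -(tmul0r (G j ⊗ tpow (G i) b)) -(r_SerreE p dot P iY iX ij).
rewrite /serre phi_tsum -map_comp -tsum_mull.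
apply: eq_tsum => k; rewrite mem_iota add0n ltnS => /andP[_ kb].
rewrite /= (daggerS_serre_coef _ _ _ _ kb (serre_exponent_even _ _ _ ij kb)) !phi_tpow.
rewrite -[tS (pi_ dot j) ⊗ _]/(phi (E j)) !phiE phi_serre_monomial //.
by rewrite (commU_l _ _ _ (commU_S _ _)); reflexivity.
Qed.

Lemma phi_wd x y : x ≡ y -> phi x ≡ phi y.
Proof.
elim=> {x y}.
- by move=> x; reflexivity.
- by move=> x y _ IH; symmetry.
- by move=> x y z _ IH1 _ IH2; rewrite IH1 IH2; reflexivity.
- by move=> x x' y y' _ IHx _ IHy /=; rewrite IHx IHy; reflexivity.
- by move=> x x' y y' _ IHx _ IHy /=; rewrite IHx IHy; reflexivity.
- by move=> x y z; exact: ueq_addA.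
- by move=> x y; exact: ueq_addC.
- by move=> x /=; rewrite rmorph0; exact: ueq_add0.
- by move=> x /=; rewrite rmorphN1 rmorph0; exact: ueq_addN.
- by move=> x y z; exact: ueq_mulA.
- by move=> x /=; rewrite rmorph1; exact: ueq_mul1l.
- by move=> x /=; rewrite rmorph1; exact: ueq_mul1r.
- by move=> x y z; exact: ueq_mulDl.
- by move=> x y z; exact: ueq_mulDr.
- by move=> a b /=; rewrite rmorphD; exact: ueq_SD.
- by move=> a b /=; rewrite rmorphM; exact: ueq_SM.
- by move=> c x; exact: ueq_Scentral.
- exact: phi_KK.
- by move=> mu nu; exact: r_JJ.
- by rewrite /= rmorph1 r_J0 r_K0 ueq_mul1l; reflexivity.
- by rewrite /= rmorph1; exact: r_J0.
- by move=> nu /=; rewrite rmorph1; exact: r_J2.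
- exact: phi_JK.
- exact: phi_JE.
- exact: phi_JF.
- exact: phi_KE.
- exact: phi_KF.
- exact: phi_EF.
- by move=> i j ij; rewrite phi_SerreE //= rmorph0; reflexivity.
- by move=> i j ij; rewrite phi_SerreF //= rmorph0; reflexivity.
Qed.

Lemma phiK x : phi (phi x) ≡ x.
Proof.
elim: x => [c|[i|i|nu|nu]|a IHa b IHb|a IHa b IHb] /=.
- by rewrite daggerSK; reflexivity.
- rewrite daggerS_piX; norm.
  by rewrite JJ_cancel /pi_ piSX2 ueq_mul1l; reflexivity.
- by reflexivity.
- by rewrite JJ_cancel; reflexivity.
- by reflexivity.
- by rewrite IHa IHb; reflexivity.
- by rewrite IHa IHb; reflexivity.
Qed.

End CoveringGroup.

Theorem mainTheorem1 (I : finType) (p : I -> bool) (dot : I -> I -> int)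
  (n : nat) (P : 'M[int]_n) (iY iX : I -> 'rV[int]_n)
  (* the bilinear form *)
  (Hsym : forall i j, dot i j = dot j i)
  (Hpos : forall i, 0 < dot i i)
  (Heven : forall i, (2 %| dot i i)%Z)
  (Hint : forall i j, i != j -> (dot i i %| 2 * dot i j)%Z)
  (Hneg : forall i j, i != j -> acart dot i j <= 0)
  (Hodd : forall i j, i != j -> p i -> (2 %| acart dot i j)%Z)
  (Hpar : forall i, odd (dd dot i) = p i)
  (HI1 : exists i, p i)
  (* the root datum *)
  (HP : P \in unitmx)
  (HiY : forall c : I -> int, \sum_i c i *: iY i = 0 -> forall i, c i = 0)
  (HiX : forall i j, pairing P (iY i) (iX j) = acart dot i j) :
  let ueqU := ueq p dot P iY iX in
  exists phi : term I n -> term I n,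
    (* phi is well defined on U = term / ueqU ... *)
    (forall x y, ueqU x y -> ueqU (phi x) (phi y)) /\
    (* ... a ring morphism ... *)
    (forall x y, ueqU (phi (tAdd x y)) (tAdd (phi x) (phi y))) /\
    (forall x y, ueqU (phi (tMul x y)) (tMul (phi x) (phi y))) /\
    (* ... restricting to the dagger involution on the scalars ... *)
    (forall c, ueqU (phi (tS c)) (tS (daggerS c))) /\
    (* ... bijective on U ... *)
    (exists psi : term I n -> term I n,
        (forall x y, ueqU x y -> ueqU (psi x) (psi y)) /\
        (forall x, ueqU (psi (phi x)) x) /\
        (forall y, ueqU (phi (psi y)) y)) /\
    (* ... with the prescribed values on generators *)
    (forall i, ueqU (phi (tG (GE i)))
        (tMul (tS (pi_ dot i)) (tMul (tG (GJ (tildeY dot iY i))) (tG (GE i))))) /\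
    (forall i, ueqU (phi (tG (GF i))) (tG (GF i))) /\
    (forall nu, ueqU (phi (tG (GK nu))) (tMul (tG (GJ nu)) (tG (GK nu)))) /\
    (forall nu, ueqU (phi (tG (GJ nu))) (tG (GJ nu))).
Proof.
move=> ueqU; pose dag := phi _ dot _ iY.
have dag_wd x y : ueqU x y -> ueqU (dag x) (dag y).
  exact: phi_wd Hpos Hneg Hodd Hpar HiX x y.
exists dag; split; first exact: dag_wd.
do 3 (split; first by move=> *; exact: ueq_refl).
split; first by exists dag; split; [exact: dag_wd | split; exact: phiK].
by do 3 (split; first by move=> *; exact: ueq_refl); move=> *; exact: ueq_refl.
Qed.
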